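(* If $t$ is an $l$-term with $t\to_s^* F_1$, then there exists an $s$-reduction from $t$ to $F_1$ in which no contracted redex occurs inside a tuple (i.e. no contracted redex occurrence lies within a component of a tuple subterm of the term being contracted).
   Context: $i$-terms (unlabelled terms) are built from variables and the constants $C,T,F,K,S$ by binary application (left-associative). $\mathrm{CLC}$ is the conditional system with rules $C\,T\,x\,y\to x$; $C\,F\,x\,y\to y$; $C\,z\,x\,y\to x \Leftarrow x=y$; $K\,x\,y\to x$; $S\,x\,y\,z\to x\,z\,(y\,z)$, where $=$ is convertibility in $\mathrm{CLC}$ itself (defined by levels: $R_0$ with empty condition, $R_{n+1}$ with $=$ the conversion of $\to_{R_n}$, $\to_{\mathrm{CLC}}=\bigcup_n\to_{R_n}$); $=_{\mathrm{CLC}}$ is conversion in $\mathrm{CLC}$. Labelled constants: $C_1,C_2,T_1,F_1,K_1$ and $S^{n_0,\dots,n_k}$ for all $k\ge1$, $n_0,\dots,n_k\ge1$. $l$-terms: every $i$-term; every labelled constant; $t_1t_2$ for $l$-terms $t_1,t_2$; and $\langle t_1,\dots,t_n\rangle$ for $l$-terms $t_1,\dots,t_n$ with $n\ge2$ (a tuple of size $n$). Convention: $\langle t\rangle\equiv t$ (not a tuple). Erasures: an $i$-term is an erasure of itself; $C$ is an erasure of $C_1,C_2$; $T$ of $T_1$; $F$ of $F_1$; $K$ of $K_1$; $S$ of each $S^{n_0,\dots,n_k}$; if $q_1,q_2$ are erasures of $t_1,t_2$ then $q_1q_2$ is an erasure of $t_1t_2$; if $q_i$ is an erasure of $t_i$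 for some $i$ then $q_i$ is an erasure of $\langle t_1,\dots,t_n\rangle$. The leftmost erasure $\lfloor t\rfloor$ always chooses $i=1$ for tuples. $\mathrm{CLC}_s$ is the rewriting system on $l$-terms (variables instantiated by arbitrary $l$-terms, contraction allowed in any context, including inside tuple components) with rules: $C_1T_1xy\to x$; $C_1F_1xy\to y$; $C_2zxy\to x\Leftarrow\lfloor x\rfloor=_{\mathrm{CLC}}\lfloor y\rfloor$; $C_2Txy\to x$; $C_2Fxy\to y$; $C_2T_1xy\to x$; $C_2F_1xy\to y$; $K_1xy\to x$; and, for each $S^{n_0,\dots,n_k}$, $S^{n_0,\dots,n_k}\,x\,\langle y_1,\dots,y_k\rangle\,\langle z_{0,1},\dots,z_{0,n_0},z_{1,1},\dots,z_{1,n_1},\dots,z_{k,1},\dots,z_{k,n_k}\rangle \to x\,\langle z_{0,1},\dots,z_{0,n_0}\rangle\,\langle y_1\langle z_{1,1},\dots,z_{1,n_1}\rangle,\dots,y_k\langle z_{k,1},\dots,z_{k,n_k}\rangle\rangle$ under the condition that $\lfloor z_{i,j}\rfloor=_{\mathrm{CLC}}\lfloor z_{i',j'}\rfloor$ for all index pairs and $\lfloor y_i\rfloor=_{\mathrm{CLC}}\lfloor y_j\rfloor$ for all $i,j$. One-step contraction in $\mathrm{CLC}_s$ is written $\to_s$ and $\to_s^*$ is its reflexive–transitive closure ($s$-reduction). *)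

From Stdlib Require Import List PArith Relations.
Import ListNotations.

Inductive iterm : Type :=
| IVar (n : nat)
| IC | IT | IF | IK | IS
| IApp (a b : iterm).

(** Root rules of CLC, with the condition of the rule C z x y -> x
    interpreted by the relation [E]. *)
Inductive clc_root (E : iterm -> iterm -> Prop) : iterm -> iterm -> Prop :=
| clc_CT : forall x y, clc_root E (IApp (IApp (IApp IC IT) x) y) x
| clc_CF : forall x y, clc_root E (IApp (IApp (IApp IC IF) x) y) y
| clc_Cz : forall z x y, E x y -> clc_root E (IApp (IApp (IApp IC z) x) y) x
| clc_K  : forall x y, clc_root E (IApp (IApp IK x) y) x
| clc_S  : forall x y z,
    clc_root E (IApp (IApp (IApp IS x) y) z) (IApp (IApp x z) (IApp y z)).

Inductive clc_ctx (E : iterm -> iterm -> Prop) : iterm -> iterm -> Prop :=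
| clc_ctx_root : forall a b, clc_root E a b -> clc_ctx E a b
| clc_ctx_l : forall a a' b, clc_ctx E a a' -> clc_ctx E (IApp a b) (IApp a' b)
| clc_ctx_r : forall a b b', clc_ctx E b b' -> clc_ctx E (IApp a b) (IApp a b').

Fixpoint clc_level (n : nat) : iterm -> iterm -> Prop :=
  match n with
  | O => clc_ctx (fun _ _ => False)
  | S m => clc_ctx (clos_refl_sym_trans iterm (clc_level m))
  end.

Definition clc_step (a b : iterm) : Prop := exists n, clc_level n a b.

Definition clc_conv : iterm -> iterm -> Prop := clos_refl_sym_trans iterm clc_step.

(** [LSl n0 n1 ns] is S^{n0,n1,...,nk} with ns = [n2;...;nk] (so k = 1 + length ns);
    labels are positive.  [LTup t1 t2 ts] is the tuple <t1,t2,ts...> of size >= 2. *)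
Inductive lterm : Type :=
| LVar (n : nat)
| LC | LT | LF | LK | LS
| LC1 | LC2 | LT1 | LF1 | LK1
| LSl (n0 n1 : positive) (ns : list positive)
| LApp (a b : lterm)
| LTup (t1 t2 : lterm) (ts : list lterm).

Fixpoint lfloor (t : lterm) : iterm :=
  match t with
  | LVar n => IVar n
  | LC | LC1 | LC2 => IC
  | LT | LT1 => IT
  | LF | LF1 => IF
  | LK | LK1 => IK
  | LS | LSl _ _ _ => IS
  | LApp a b => IApp (lfloor a) (lfloor b)
  | LTup t1 _ _ => lfloor t1
  end.

(** <t1,...,tn>, with the convention <t> = t (only used on nonempty lists). *)
Definition mk_tuple (l : list lterm) : lterm :=
  match l with
  | [] => LVar 0
  | [t] => t
  | t1 :: t2 :: ts => LTup t1 t2 ts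
  end.

Definition app3 (f a b c : lterm) : lterm := LApp (LApp (LApp f a) b) c.

Definition lconv (u v : lterm) : Prop := clc_conv (lfloor u) (lfloor v).

Inductive s_root : lterm -> lterm -> Prop :=
| s_C1T1 : forall x y, s_root (app3 LC1 LT1 x y) x
| s_C1F1 : forall x y, s_root (app3 LC1 LF1 x y) y
| s_C2z  : forall z x y, lconv x y -> s_root (app3 LC2 z x y) x
| s_C2T  : forall x y, s_root (app3 LC2 LT x y) x
| s_C2F  : forall x y, s_root (app3 LC2 LF x y) y
| s_C2T1 : forall x y, s_root (app3 LC2 LT1 x y) x
| s_C2F1 : forall x y, s_root (app3 LC2 LF1 x y) y
| s_K1   : forall x y, s_root (LApp (LApp LK1 x) y) x
| s_S : forall (n0 n1 : positive) (ns : list positive) (x : lterm)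
          (ys : list lterm) (z0 : list lterm) (zss : list (list lterm)),
    length ys = S (length ns) ->
    map (@length lterm) (z0 :: zss) = map Pos.to_nat (n0 :: n1 :: ns) ->
    (forall z z', In z (z0 ++ concat zss) -> In z' (z0 ++ concat zss) -> lconv z z') ->
    (forall y y', In y ys -> In y' ys -> lconv y y') ->
    s_root (app3 (LSl n0 n1 ns) x (mk_tuple ys) (mk_tuple (z0 ++ concat zss)))
           (LApp (LApp x (mk_tuple z0))
                 (mk_tuple (map (fun p => LApp (fst p) (mk_tuple (snd p)))
                                (combine ys zss)))).

Inductive s_step : lterm -> lterm -> Prop :=
| s_step_root : forall a b, s_root a b -> s_step a b
| s_step_appl : forall a a' b, s_step a a' -> s_step (LApp a b) (LApp a' b)
| s_step_appr : forall a b b', s_step b b' -> s_step (LApp a b) (LApp a b')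
| s_step_tup1 : forall t1 t1' t2 ts, s_step t1 t1' -> s_step (LTup t1 t2 ts) (LTup t1' t2 ts)
| s_step_tup2 : forall t1 t2 t2' ts, s_step t2 t2' -> s_step (LTup t1 t2 ts) (LTup t1 t2' ts)
| s_step_tupr : forall t1 t2 l1 u u' l2, s_step u u' ->
    s_step (LTup t1 t2 (l1 ++ u :: l2)) (LTup t1 t2 (l1 ++ u' :: l2)).

(** One-step s-contraction of a redex not lying inside any tuple component:
    the redex position is reached through application nodes only. *)
Inductive s_step_out : lterm -> lterm -> Prop :=
| s_out_root : forall a b, s_root a b -> s_step_out a b
| s_out_appl : forall a a' b, s_step_out a a' -> s_step_out (LApp a b) (LApp a' b)
| s_out_appr : forall a b b', s_step_out b b' -> s_step_out (LApp a b) (LApp a b').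

Definition s_red : lterm -> lterm -> Prop := clos_refl_trans lterm s_step.
Definition s_red_out : lterm -> lterm -> Prop := clos_refl_trans lterm s_step_out.

From Stdlib Require Import List PArith Relations Lia Wf_nat.
Import ListNotations.

(** Call an s-step _outer_ when its redex is reached from the root through
    application nodes only, and _inner_ when the redex lies inside a
    component of some tuple.  The theorem follows from a commutation
    property: an inner step followed by an outer step can be replaced by an
    outer step followed by at most one step ([swap]).  Indeed a redex cannot
    be created by an inner step except by reducing one of its arguments,
    and for every CLC_s rule, reducing the arguments beforehand still gives
    a redex (the convertibility conditions are stable because every s-step
    preserves the leftmost erasure up to =_CLC) whose contractum differs by
    at most one step from the original one.

    Postponement is proved by induction on the length of a
    reduction whose target is tuple-free (no inner step can produce such a
    term); [mainTheorem16] is the instance with target F_1. *)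

Inductive nsteps {A : Type} (R : A -> A -> Prop) : nat -> A -> A -> Prop :=
| nsteps0 : forall a, nsteps R 0 a a
| nstepsS : forall n a b c, R a b -> nsteps R n b c -> nsteps R (S n) a c.

Lemma clos_rt_nsteps {A : Type} (R : A -> A -> Prop) (a b : A) :
  clos_refl_trans A R a b -> exists n, nsteps R n a b.
Proof.
  intros H; apply clos_rt_rt1n in H; induction H as [|a b c Hab _ [n Hn]].
  - exists 0; constructor.
  - exists (S n); econstructor; eauto.
Qed.

Lemma nsteps_clos_rt {A : Type} (R : A -> A -> Prop) (n : nat) (a b : A) :
  nsteps R n a b -> clos_refl_trans A R a b.
Proof.
  induction 1; [apply rt_refl|]. eapply rt_trans; [apply rt_step|]; eauto.
Qed.

Lemma nsteps_mono {A : Type} (R R' : A -> A -> Prop) (n : nat) (a b : A) :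
  (forall x y, R x y -> R' x y) -> nsteps R n a b -> nsteps R' n a b.
Proof. intros HR; induction 1; econstructor; eauto. Qed.

Lemma rst_map {A B : Type} (R : A -> A -> Prop) (R' : B -> B -> Prop) (f : A -> B) :
  (forall x y, R x y -> R' (f x) (f y)) ->
  forall x y, clos_refl_sym_trans A R x y -> clos_refl_sym_trans B R' (f x) (f y).
Proof.
  intros Hf x y H; induction H.
  - apply rst_step; auto.
  - apply rst_refl.
  - apply rst_sym; auto.
  - eapply rst_trans; eauto.
Qed.

Lemma clc_ctx_mono (E E' : iterm -> iterm -> Prop) (a b : iterm) :
  (forall x y, E x y -> E' x y) -> clc_ctx E a b -> clc_ctx E' a b.
Proof.
  intros HE H; induction H as [a b Hr| | ]; [|constructor 2|constructor 3]; auto.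
  apply clc_ctx_root; destruct Hr; constructor; auto.
Qed.

Lemma clc_level_S (n : nat) (a b : iterm) : clc_level n a b -> clc_level (S n) a b.
Proof.
  revert a b; induction n; intros a b; apply clc_ctx_mono.
  - intros x y [].
  - apply (rst_map _ _ (fun t => t)); auto.
Qed.

Lemma clc_level_le (n m : nat) (a b : iterm) :
  n <= m -> clc_level n a b -> clc_level m a b.
Proof. induction 1; auto using clc_level_S. Qed.

(** Each =_CLC proof only uses finitely many levels, hence a single one. *)
Lemma clc_conv_level (a b : iterm) :
  clc_conv a b -> exists n, clos_refl_sym_trans iterm (clc_level n) a b.
Proof.
  induction 1 as [a b [n H]| a | a b _ [n H] | a b c _ [n1 H1] _ [n2 H2]].
  - exists n; apply rst_step; auto.
  - exists 0; apply rst_refl.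
  - exists n; apply rst_sym; auto.
  - exists (Nat.max n1 n2); eapply rst_trans.
    + apply (rst_map (clc_level n1) (clc_level (Nat.max n1 n2)) (fun t => t)) in H1; [exact H1|].
      intros x y; apply clc_level_le; lia.
    + apply (rst_map (clc_level n2) (clc_level (Nat.max n1 n2)) (fun t => t)) in H2; [exact H2|].
      intros x y; apply clc_level_le; lia.
Qed.

Lemma clc_conv_app (a a' b b' : iterm) :
  clc_conv a a' -> clc_conv b b' -> clc_conv (IApp a b) (IApp a' b').
Proof.
  intros Ha Hb; eapply rst_trans.
  - apply (rst_map clc_step clc_step (fun t => IApp t b)); [|exact Ha].
    intros x y [n H]; exists n; destruct n; apply clc_ctx_l; auto.
  - apply (rst_map clc_step clc_step (fun t => IApp a' t)); [|exact Hb].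
    intros x y [n H]; exists n; destruct n; apply clc_ctx_r; auto.
Qed.

Lemma clc_conv_root0 (a b : iterm) : clc_root (fun _ _ => False) a b -> clc_conv a b.
Proof. intros H; apply rst_step; exists 0; apply clc_ctx_root; auto. Qed.

Lemma lconv_refl (a : lterm) : lconv a a.
Proof. apply rst_refl. Qed.

Lemma lconv_sym (a b : lterm) : lconv a b -> lconv b a.
Proof. apply rst_sym. Qed.

Lemma lconv_trans (a b c : lterm) : lconv a b -> lconv b c -> lconv a c.
Proof. apply rst_trans. Qed.

Lemma lfloor_mk_tuple (a : lterm) (l : list lterm) :
  lfloor (mk_tuple (a :: l)) = lfloor a.
Proof. destruct l; reflexivity. Qed.

Lemma cons_of_length_pos {A : Type} (l : list A) (p : positive) :
  length l = Pos.to_nat p -> exists a l', l = a :: l'.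
Proof.
  destruct l; simpl; [|eauto]. pose proof (Pos2Nat.is_pos p); lia.
Qed.

(** The leftmost erasure of a contractum is convertible to that of its redex:
    the erasure of an S^{n..} redex is an S-redex contracting to it, up to
    replacing z_{1,1} by the convertible z_{0,1}. *)
Lemma s_root_lconv (a b : lterm) : s_root a b -> lconv a b.
Proof.
  unfold lconv; destruct 1 as [| |z x y H| | | | | |n0 n1 ns x ys z0 zss Hys Hlen Hz _];
    try solve [apply clc_conv_root0; constructor].
  - apply clc_conv_level in H as [n Hn]; apply rst_step; exists (S n); simpl.
    apply clc_ctx_root, clc_Cz; exact Hn.
  - injection Hlen as Hz0 Hzss.
    destruct (cons_of_length_pos _ _ Hz0) as [z01 [z0' ->]].
    destruct ys as [|y ys']; [discriminate|].
    destruct zss as [|zs1 zss']; [discriminate|].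
    injection Hzss as Hzs1 _.
    destruct (cons_of_length_pos _ _ Hzs1) as [z11 [zs1' ->]].
    cbn [combine map app fst snd lfloor app3]; rewrite !lfloor_mk_tuple; cbn [lfloor].
    rewrite lfloor_mk_tuple.
    eapply rst_trans; [apply clc_conv_root0, clc_S|].
    apply clc_conv_app; [apply rst_refl|].
    apply clc_conv_app; [apply rst_refl|].
    apply Hz; [left; reflexivity|].
    right; apply in_or_app; right; left; reflexivity.
Qed.

Lemma s_step_lconv (a b : lterm) : s_step a b -> lconv a b.
Proof.
  unfold lconv; induction 1; cbn [lfloor].
  - apply s_root_lconv; assumption.
  - apply clc_conv_app; [assumption | apply rst_refl].
  - apply clc_conv_app; [apply rst_refl | assumption].
  - assumption.
  - apply rst_refl.
  - apply rst_refl.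
Qed.

Section ListStep.
Context {A : Type} (R : A -> A -> Prop).

Inductive list_step : list A -> list A -> Prop :=
| list_step_head : forall u u' l, R u u' -> list_step (u :: l) (u' :: l)
| list_step_tail : forall a l l', list_step l l' -> list_step (a :: l) (a :: l').

Lemma list_step_app (l1 l2 : list A) (u u' : A) :
  R u u' -> list_step (l1 ++ u :: l2) (l1 ++ u' :: l2).
Proof. intros H; induction l1; simpl; constructor; auto. Qed.

Lemma list_step_decompose (l l' : list A) : list_step l l' ->
  exists l1 u u' l2, l = l1 ++ u :: l2 /\ l' = l1 ++ u' :: l2 /\ R u u'.
Proof.
  induction 1 as [u u' l H|a l l' _ [l1 [u [u' [l2 [-> [-> H]]]]]]].
  - exists [], u, u', l; auto.
  - exists (a :: l1), u, u', l2; auto.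
Qed.

Lemma list_step_length (l l' : list A) : list_step l l' -> length l = length l'.
Proof. induction 1; simpl; auto. Qed.

Lemma list_step_map_eq {B : Type} (f : A -> B) (l l' : list A) :
  (forall u u', R u u' -> f u = f u') -> list_step l l' -> map f l = map f l'.
Proof. intros Hf; induction 1; simpl; f_equal; auto. Qed.

Lemma list_step_app_inv (c a b : list A) : list_step c (a ++ b) ->
  (exists a', list_step a' a /\ c = a' ++ b) \/ (exists b', list_step b' b /\ c = a ++ b').
Proof.
  revert c; induction a as [|x a IH]; intros c H; simpl in H.
  - right; exists c; auto.
  - inversion H as [u u' l Hu|y l l' Hl]; subst.
    + left; exists (u :: a); split; [constructor|]; auto.
    + destruct (IH _ Hl) as [[a' [Ha ->]]|[b' [Hb ->]]].
      * left; exists (x :: a'); split; [constructor|]; auto.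
      * right; exists b'; auto.
Qed.

End ListStep.

Lemma list_step_concat_inv {A : Type} (R : A -> A -> Prop)
  (c : list A) (zss : list (list A)) : list_step R c (concat zss) ->
  exists zss', list_step (list_step R) zss' zss /\ c = concat zss'.
Proof.
  revert c; induction zss as [|zs zss IH]; intros c H; simpl in H; [inversion H|].
  apply list_step_app_inv in H as [[zs' [Hzs ->]]|[c' [Hc ->]]].
  - exists (zs' :: zss); split; [constructor|]; auto.
  - destruct (IH _ Hc) as [zss' [Hzss ->]].
    exists (zs :: zss'); split; [constructor|]; auto.
Qed.

Lemma list_step_combine_l {A B C : Type} (R : A -> A -> Prop) (R' : C -> C -> Prop)
  (h : A * B -> C) (l l' : list A) (m : list B) :
  (forall a a' b, R a a' -> R' (h (a, b)) (h (a', b))) ->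
  list_step R l l' -> length l <= length m ->
  list_step R' (map h (combine l m)) (map h (combine l' m)).
Proof.
  intros Hh H; revert m; induction H; intros [|b m] Hlen; simpl in *; try lia;
    constructor; auto with arith.
Qed.

Lemma list_step_combine_r {A B C : Type} (R : B -> B -> Prop) (R' : C -> C -> Prop)
  (h : A * B -> C) (l : list A) (m m' : list B) :
  (forall a b b', R b b' -> R' (h (a, b)) (h (a, b'))) ->
  list_step R m m' -> length m <= length l ->
  list_step R' (map h (combine l m)) (map h (combine l m')).
Proof.
  intros Hh H; revert l; induction H as [b b' m Hb|b m m' _ IH];
    intros [|a l] Hlen; simpl in *; try lia;
    constructor; auto with arith.
Qed.

(** All elements of [l] have =_CLC-convertible leftmost erasures: the side
    condition of the S-rules. *)
Definition all_lconv (l : list lterm) : Prop :=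
  forall a b, In a l -> In b l -> lconv a b.

Lemma all_lconv_list_step (l l' : list lterm) :
  list_step s_step l l' -> all_lconv l' -> all_lconv l.
Proof.
  intros Hl Hl'.
  assert (Hback : forall a, In a l -> exists a', In a' l' /\ lconv a a').
  { clear Hl'; induction Hl as [u u' l Hu|c l l' _ IH]; intros a [<-|Ha].
    - exists u'; split; [left|apply s_step_lconv]; auto.
    - exists a; split; [right|apply lconv_refl]; auto.
    - exists c; split; [left|apply lconv_refl]; auto.
    - destruct (IH a Ha) as [a' [Ha' Haa']]; exists a'; split; [right|]; auto. }
  intros a b Ha Hb.
  destruct (Hback a Ha) as [a' [Ha' Haa']]; destruct (Hback b Hb) as [b' [Hb' Hbb']].
  eapply lconv_trans; [exact Haa'|].
  eapply lconv_trans; [apply Hl'; eauto|]; apply lconv_sym; auto.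
Qed.

Lemma mk_tuple_step (l l' : list lterm) :
  list_step s_step l l' -> s_step (mk_tuple l) (mk_tuple l').
Proof.
  intros H; apply list_step_decompose in H as [l1 [u [u' [l2 [-> [-> H]]]]]].
  destruct l1 as [|a [|b l1]]; simpl.
  - destruct l2; [exact H|]; apply s_step_tup1; exact H.
  - apply s_step_tup2; exact H.
  - apply s_step_tupr; exact H.
Qed.

Inductive s_step_in : lterm -> lterm -> Prop :=
| s_in_appl : forall a a' b, s_step_in a a' -> s_step_in (LApp a b) (LApp a' b)
| s_in_appr : forall a b b', s_step_in b b' -> s_step_in (LApp a b) (LApp a b')
| s_in_tup : forall t1 t2 ts t1' t2' ts',
    list_step s_step (t1 :: t2 :: ts) (t1' :: t2' :: ts') ->
    s_step_in (LTup t1 t2 ts) (LTup t1' t2' ts').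

Lemma s_step_in_step (a b : lterm) : s_step_in a b -> s_step a b.
Proof.
  induction 1; [apply s_step_appl | apply s_step_appr | apply (mk_tuple_step _ _ H)];
    assumption.
Qed.

Lemma s_step_out_step (a b : lterm) : s_step_out a b -> s_step a b.
Proof.
  induction 1; [apply s_step_root | apply s_step_appl | apply s_step_appr]; assumption.
Qed.

Lemma s_step_out_or_in (a b : lterm) : s_step a b -> s_step_out a b \/ s_step_in a b.
Proof.
  induction 1 as [a b H|a a' b _ [H|H]|a b b' _ [H|H]|t1 t1' t2 ts H _
                 |t1 t2 t2' ts H _|t1 t2 l1 u u' l2 H _].
  - left; apply s_out_root; exact H.
  - left; apply s_out_appl; exact H.
  - right; apply s_in_appl; exact H.
  - left; apply s_out_appr; exact H.
  - right; apply s_in_appr; exact H.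
  - right; apply s_in_tup; constructor; exact H.
  - right; apply s_in_tup; do 2 constructor; exact H.
  - right; apply s_in_tup; apply (list_step_app _ (t1 :: t2 :: l1)); exact H.
Qed.

Fixpoint tuple_free (t : lterm) : Prop :=
  match t with
  | LApp a b => tuple_free a /\ tuple_free b
  | LTup _ _ _ => False
  | _ => True
  end.

Lemma s_step_in_not_tuple_free (a b : lterm) : s_step_in a b -> ~ tuple_free b.
Proof. induction 1; simpl; tauto. Qed.

Lemma s_step_in_app_inv (t a b : lterm) : s_step_in t (LApp a b) ->
  (exists a0, t = LApp a0 b /\ s_step_in a0 a) \/
  (exists b0, t = LApp a b0 /\ s_step_in b0 b).
Proof. intros H; inversion H; subst; eauto. Qed.

Lemma s_step_in_app3_inv (t f a b c : lterm) : s_step_in t (app3 f a b c) ->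
  (exists f0, t = app3 f0 a b c /\ s_step_in f0 f) \/
  (exists a0, t = app3 f a0 b c /\ s_step_in a0 a) \/
  (exists b0, t = app3 f a b0 c /\ s_step_in b0 b) \/
  (exists c0, t = app3 f a b c0 /\ s_step_in c0 c).
Proof.
  intros H.
  apply s_step_in_app_inv in H as [[t1 [-> H]]|[c0 [-> H]]].
  2: right; right; right; exists c0; split; [reflexivity|exact H].
  apply s_step_in_app_inv in H as [[t2 [-> H]]|[b0 [-> H]]].
  2: right; right; left; exists b0; split; [reflexivity|exact H].
  apply s_step_in_app_inv in H as [[f0 [-> H]]|[a0 [-> H]]].
  - left; exists f0; split; [reflexivity|exact H].
  - right; left; exists a0; split; [reflexivity|exact H].
Qed.

Lemma s_step_in_mk_tuple_inv (t : lterm) (l : list lterm) :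
  s_step_in t (mk_tuple l) -> l <> [] ->
  exists l0, t = mk_tuple l0 /\ list_step s_step l0 l.
Proof.
  intros H Hl; destruct l as [|a [|b l]]; [congruence| |].
  - exists [t]; split; [reflexivity|]; constructor; apply s_step_in_step; exact H.
  - inversion H as [| |t1 t2 ts t1' t2' ts' Hstep]; subst.
    exists (t1 :: t2 :: ts); split; [reflexivity|exact Hstep].
Qed.

Definition s_contractum (x : lterm) (ys z0 : list lterm) (zss : list (list lterm))
  : lterm :=
  LApp (LApp x (mk_tuple z0))
       (mk_tuple (map (fun p => LApp (fst p) (mk_tuple (snd p))) (combine ys zss))).

Definition s_redex_ok (n0 n1 : positive) (ns : list positive)
  (ys z0 : list lterm) (zss : list (list lterm)) : Prop :=
  length ys = S (length ns) /\
  map (@length lterm) (z0 :: zss) = map Pos.to_nat (n0 :: n1 :: ns) /\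
  all_lconv (z0 ++ concat zss) /\ all_lconv ys.

Lemma s_root_S (n0 n1 : positive) (ns : list positive) (x : lterm)
  (ys z0 : list lterm) (zss : list (list lterm)) :
  s_redex_ok n0 n1 ns ys z0 zss ->
  s_root (app3 (LSl n0 n1 ns) x (mk_tuple ys) (mk_tuple (z0 ++ concat zss)))
         (s_contractum x ys z0 zss).
Proof. intros (Hys & Hlen & Hz & Hy); apply s_S; assumption. Qed.

Lemma s_redex_ok_length (n0 n1 : positive) (ns : list positive)
  (ys z0 : list lterm) (zss : list (list lterm)) :
  s_redex_ok n0 n1 ns ys z0 zss -> length zss = length ys.
Proof.
  intros (Hys & Hlen & _); injection Hlen as _ Hlen.
  apply (f_equal (@length nat)) in Hlen; rewrite !length_map in Hlen.
  simpl in Hlen; rewrite length_map in Hlen; congruence.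
Qed.

Lemma s_redex_ok_z0 (n0 n1 : positive) (ns : list positive)
  (ys z0 : list lterm) (zss : list (list lterm)) :
  s_redex_ok n0 n1 ns ys z0 zss -> z0 <> [].
Proof.
  intros (_ & Hlen & _) ->; injection Hlen as Hz0 _.
  pose proof (Pos2Nat.is_pos n0); simpl in Hz0; lia.
Qed.

Lemma s_redex_step_ys (n0 n1 : positive) (ns : list positive) (x : lterm)
  (ys0 ys z0 : list lterm) (zss : list (list lterm)) :
  s_redex_ok n0 n1 ns ys z0 zss -> list_step s_step ys0 ys ->
  s_redex_ok n0 n1 ns ys0 z0 zss /\
  s_step (s_contractum x ys0 z0 zss) (s_contractum x ys z0 zss).
Proof.
  intros Hok Hstep; pose proof (s_redex_ok_length _ _ _ _ _ _ Hok) as Hzss.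
  destruct Hok as (Hys & Hlen & Hz & Hy); split.
  - repeat split; try assumption.
    + rewrite (list_step_length _ _ _ Hstep); exact Hys.
    + apply (all_lconv_list_step _ _ Hstep Hy).
  - apply s_step_appr, mk_tuple_step, list_step_combine_l with (R := s_step).
    + intros a a' b H; apply s_step_appl; exact H.
    + exact Hstep.
    + rewrite (list_step_length _ _ _ Hstep), Hzss; lia.
Qed.

Lemma s_redex_step_zs (n0 n1 : positive) (ns : list positive) (x : lterm)
  (ys z0 : list lterm) (zss : list (list lterm)) (zs0 : list lterm) :
  s_redex_ok n0 n1 ns ys z0 zss -> list_step s_step zs0 (z0 ++ concat zss) ->
  exists z0' zss', zs0 = z0' ++ concat zss' /\
    s_redex_ok n0 n1 ns ys z0' zss' /\
    s_step (s_contractum x ys z0' zss') (s_contractum x ys z0 zss).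
Proof.
  intros Hok Hstep; pose proof (s_redex_ok_length _ _ _ _ _ _ Hok) as Hzss.
  destruct Hok as (Hys & Hlen & Hz & Hy).
  pose proof (all_lconv_list_step _ _ Hstep Hz) as Hz0.
  apply list_step_app_inv in Hstep as [[z0' [Hstep ->]]|[c [Hc ->]]].
  - exists z0', zss; repeat split; try assumption.
    + simpl; rewrite (list_step_length _ _ _ Hstep); exact Hlen.
    + apply s_step_appl, s_step_appr, mk_tuple_step; exact Hstep.
  - apply list_step_concat_inv in Hc as [zss' [Hstep ->]].
    exists z0, zss'; repeat split; try assumption.
    + rewrite <- Hlen; simpl; f_equal.
      apply (list_step_map_eq _ _ _ _ (list_step_length s_step)); assumption.
    + apply s_step_appr, mk_tuple_step, list_step_combine_r with (R := list_step s_step).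
      * intros a b b' H; apply s_step_appr, mk_tuple_step; exact H.
      * exact Hstep.
      * rewrite (list_step_length _ _ _ Hstep), Hzss; lia.
Qed.

Lemma swap_root_S (n0 n1 : positive) (ns : list positive) (x : lterm)
  (ys z0 : list lterm) (zss : list (list lterm)) (t : lterm) :
  s_redex_ok n0 n1 ns ys z0 zss ->
  s_step_in t (app3 (LSl n0 n1 ns) x (mk_tuple ys) (mk_tuple (z0 ++ concat zss))) ->
  exists t', s_root t t' /\ clos_refl lterm s_step t' (s_contractum x ys z0 zss).
Proof.
  intros Hok Hin.
  apply s_step_in_app3_inv in Hin
    as [[f0 [-> Hf]]|[[x0 [-> Hx]]|[[Y [-> HY]]|[Z [-> HZ]]]]].
  - inversion Hf.
  - exists (s_contractum x0 ys z0 zss); split; [apply s_root_S; exact Hok|].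
    apply r_step, s_step_appl, s_step_appl, s_step_in_step; exact Hx.
  - apply s_step_in_mk_tuple_inv in HY as [ys0 [-> Hys0]].
    2: { intros ->; destruct Hok as [Hys _]; discriminate. }
    destruct (s_redex_step_ys _ _ _ x _ _ _ _ Hok Hys0) as [Hok0 Hstep].
    exists (s_contractum x ys0 z0 zss); split; [apply s_root_S|apply r_step]; assumption.
  - apply s_step_in_mk_tuple_inv in HZ as [zs0 [-> Hzs0]].
    2: { apply s_redex_ok_z0 in Hok; intros Hnil; apply app_eq_nil in Hnil; tauto. }
    destruct (s_redex_step_zs _ _ _ x _ _ _ _ Hok Hzs0)
      as [z0' [zss' [-> [Hok0 Hstep]]]].
    exists (s_contractum x ys z0' zss'); split; [apply s_root_S|apply r_step]; assumption.
Qed.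

Lemma swap_root (t r r' : lterm) : s_step_in t r -> s_root r r' ->
  exists t', s_root t t' /\ clos_refl lterm s_step t' r'.
Proof.
  intros Hin Hr.
  destruct Hr as [x y|x y|z x y Hxy|x y|x y|x y|x y|x y|n0 n1 ns x ys z0 zss Hys Hl Hz Hy].
  9: { apply (swap_root_S n0 n1 ns x ys z0 zss); [repeat split|]; assumption. }
  8: { apply s_step_in_app_inv in Hin as [[t1 [-> H]]|[y0 [-> H]]].
       - apply s_step_in_app_inv in H as [[k [-> H]]|[x0 [-> H]]]; [inversion H|].
         exists x0; split; [apply s_K1|apply r_step, s_step_in_step; exact H].
       - exists x; split; [apply s_K1|apply r_refl]. }
  (* C-rules: the head and the boolean constants admit no inner step *)
  all: apply s_step_in_app3_inv in Hin
         as [[f0 [-> H]]|[[a0 [-> H]]|[[x0 [-> H]]|[y0 [-> H]]]]];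
       try solve [inversion H].
  (* C2 z x y: the side condition survives since s-steps preserve =_CLC *)
  5: { exists x; split; [apply s_C2z; exact Hxy|apply r_refl]. }
  5: { exists x0; split; [apply s_C2z|apply r_step, s_step_in_step; exact H].
       apply (lconv_trans _ x); [apply s_step_lconv, s_step_in_step|]; assumption. }
  5: { exists x; split; [apply s_C2z|apply r_refl].
       apply (lconv_trans _ y); [|apply lconv_sym, s_step_lconv, s_step_in_step];
         assumption. }
  (* unconditional rules: the contractum is an argument, possibly reduced *)
  all: eexists; split;
    [ first [ apply s_C1T1 | apply s_C1F1 | apply s_C2T | apply s_C2F
            | apply s_C2T1 | apply s_C2F1 ]
    | first [ apply r_refl | apply r_step, s_step_in_step; exact H ] ].
Qed.

Lemma swap (t r r' : lterm) : s_step_in t r -> s_step_out r r' ->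
  exists t', s_step_out t t' /\ clos_refl lterm s_step t' r'.
Proof.
  intros Hin Hout; revert t Hin.
  induction Hout as [r r' Hr|a a' b Ha IH|a b b' Hb IH]; intros t Hin.
  - destruct (swap_root _ _ _ Hin Hr) as [t' [Ht' Hrefl]].
    exists t'; split; [apply s_out_root|]; assumption.
  - apply s_step_in_app_inv in Hin as [[a0 [-> H]]|[b0 [-> H]]].
    + destruct (IH _ H) as [t' [Ht' Hrefl]].
      exists (LApp t' b); split; [apply s_out_appl; exact Ht'|].
      destruct Hrefl; [apply r_step, s_step_appl; assumption|apply r_refl].
    + exists (LApp a' b0); split; [apply s_out_appl; exact Ha|].
      apply r_step, s_step_appr, s_step_in_step; exact H.
  - apply s_step_in_app_inv in Hin as [[a0 [-> H]]|[b0 [-> H]]].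
    + exists (LApp a0 b'); split; [apply s_out_appr; exact Hb|].
      apply r_step, s_step_appl, s_step_in_step; exact H.
    + destruct (IH _ H) as [t' [Ht' Hrefl]].
      exists (LApp a t'); split; [apply s_out_appr; exact Ht'|].
      destruct Hrefl; [apply r_step, s_step_appr; assumption|apply r_refl].
Qed.

(** By induction on n: an outer first step is
    kept; an inner first step is swapped with the first outer step of the
    remaining (outer, by induction) reduction, which yields a shorter
    reduction to which the induction hypothesis applies. *)
Lemma postpone_inner (n : nat) : forall t v, tuple_free v ->
  nsteps s_step n t v -> exists m, m <= n /\ nsteps s_step_out m t v.
Proof.
  induction n as [n IH] using (well_founded_induction lt_wf).
  intros t v Hv Hred; inversion Hred as [|k t0 u v0 Hfirst Hrest]; subst.
  { exists 0; split; [lia|constructor]. }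
  destruct (IH k ltac:(lia) u v Hv Hrest) as [m [Hm Hu]].
  destruct (s_step_out_or_in _ _ Hfirst) as [Hout|Hin].
  { exists (S m); split; [lia|econstructor; eassumption]. }
  inversion Hu as [|m' u0 w v0 Huw Hw]; subst.
  { exfalso; exact (s_step_in_not_tuple_free _ _ Hin Hv). }
  destruct (swap _ _ _ Hin Huw) as [t' [Ht' Hrefl]].
  inversion Hrefl as [w' Hstep|]; subst.
  - assert (Hshort : nsteps s_step (S m') t' v).
    { econstructor; [exact Hstep|]; eapply nsteps_mono; [apply s_step_out_step|exact Hw]. }
    destruct (IH (S m') ltac:(lia) t' v Hv Hshort) as [m2 [Hm2 Ht'v]].
    exists (S m2); split; [lia|econstructor; eassumption].
  - exists (S m'); split; [lia|econstructor; eassumption].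
Qed.

Theorem mainTheorem16 : forall t : lterm, s_red t LF1 -> s_red_out t LF1.
Proof.
  intros t Hred; apply clos_rt_nsteps in Hred as [n Hn].
  destruct (postpone_inner n t LF1 I Hn) as [m [_ Hm]].
  exact (nsteps_clos_rt _ _ _ _ Hm).
Qed.
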